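(* Let $Q$ be a Moufang loop, $S\le Q$, and $x,y\in Q$. Then $x^{-1}(xS\cap yS)=y^{-1}(xS\cap yS)$.
   Context: A Moufang loop is a loop satisfying $((xy)x)z=x(y(xz))$; such loops have two-sided inverses $x^{-1}$ and the inverse property. For a set $A$, $xA=\{xa:a\in A\}$. *)

From mathcomp Require Import all_boot.
From mathcomp Require Import classical_sets.

Set Implicit Arguments.
Unset Strict Implicit.
Unset Printing Implicit Defensive.

Local Open Scope classical_set_scope.

(* A loop, given in its equational (universal-algebra) form (Q, *, \, /, 1):
   left and right divisions are the unique solutions of a*x = b and y*a = b. *)
Record loop := Loop {
  carrier :> Type;
  lmul : carrier -> carrier -> carrier;
  ldiv : carrier -> carrier -> carrier;
  rdiv : carrier -> carrier -> carrier;   (* rdiv b a = b / a *)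
  lone : carrier;
  mul_ldiv : forall a b, lmul a (ldiv a b) = b;
  ldiv_mul : forall a b, ldiv a (lmul a b) = b;
  rdiv_mul : forall a b, lmul (rdiv b a) a = b;
  mul_rdiv : forall a b, rdiv (lmul b a) a = b;
  mul1l : forall a, lmul lone a = a;
  mulr1 : forall a, lmul a lone = a
}.

Definition moufang (Q : loop) : Prop :=
  forall x y z : Q, lmul (lmul (lmul x y) x) z = lmul x (lmul y (lmul x z)).

(* The inverse x^{-1}: the solution of x * u = 1 (in a Moufang loop this is
   the two-sided inverse). *)
Definition linv (Q : loop) (x : Q) : Q := ldiv x (lone Q).

Definition subloop (Q : loop) (S : set Q) : Prop :=
  S (lone Q) /\
  (forall a b, S a -> S b -> S (lmul a b)) /\
  (forall a b, S a -> S b -> S (ldiv a b)) /\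
  (forall a b, S a -> S b -> S (rdiv a b)).

Definition lcoset (Q : loop) (x : Q) (A : set Q) : set Q :=
  [set lmul x a | a in A].

(* If x s = y t with s, t in S, the Moufang identities give
   x^{-1}(y s) = (s t^{-1}) s, an element of S; hence y s lies in x S as well
   as in y S. So every s = x^{-1}(x s) of the left-hand side is also
   y^{-1}(y s), an element of the right-hand side; the other inclusion is
   symmetric. *)

From mathcomp Require Import all_boot.
From mathcomp Require Import classical_sets.

Local Open Scope classical_set_scope.

Section MoufangLoop.
Variable Q : loop.
Hypothesis HQ : moufang Q.
Local Notation "a * b" := (lmul a b).
Local Notation i := (@linv Q).
Local Notation one := (lone Q).

Lemma mulI (a : Q) : injective (lmul a).
Proof. by move=> b c h; rewrite -(ldiv_mul a b) h ldiv_mul. Qed.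

Lemma flexible (x y : Q) : (x * y) * x = x * (y * x).
Proof. by have := HQ x y one; rewrite !mulr1. Qed.

Lemma mulV (x : Q) : x * i x = one.
Proof. exact: mul_ldiv. Qed.

Lemma mulKl (x z : Q) : i x * (x * z) = z.
Proof. by apply: (@mulI x); rewrite -HQ mulV mul1l. Qed.

Lemma mulVl (x : Q) : i x * x = one.
Proof. by have := mulKl x one; rewrite mulr1. Qed.

Lemma invK (x : Q) : i (i x) = x.
Proof. by apply: (@mulI (i x)); rewrite mulV mulVl. Qed.

Lemma mulKVl (x z : Q) : x * (i x * z) = z.
Proof. by have := mulKl (i x) z; rewrite invK. Qed.

Lemma mulKr (w x : Q) : (w * x) * i x = w.
Proof. by have := HQ x (i x * w) (i x); rewrite mulV mulr1 mulKVl => ->. Qed.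

Lemma mulKVr (w x : Q) : (w * i x) * x = w.
Proof. by have := mulKr w (i x); rewrite invK. Qed.

Lemma invM (a b : Q) : i (a * b) = i b * i a.
Proof.
have ha : a = (a * b) * i b by rewrite mulKr.
have hb : i (a * b) * a = i b by rewrite {2}ha mulKl.
by have := mulKr (i (a * b)) a; rewrite hb.
Qed.

Lemma inv_inj : injective i.
Proof. by move=> a b h; rewrite -(invK a) h invK. Qed.

Lemma moufang_right (z x y : Q) : z * (x * (y * x)) = ((z * x) * y) * x.
Proof. by apply: inv_inj; rewrite !invM HQ. Qed.

Lemma linv_mul_coset {x y s t : Q} :
  x * s = y * t -> i x * (y * s) = (s * i t) * s.
Proof.
move=> eq_xs_yt.
have hy : y = (x * s) * i t by rewrite eq_xs_yt mulKr.
have hx : i x = s * i (x * s) by rewrite -{1}(mulKr x s) invM invK.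
have hv : y = s * (i s * y) by rewrite mulKVl.
by rewrite hx {1}hv flexible moufang_right HQ -hv hy mulKl.
Qed.

Lemma linv_meet_lcoset_sub (S : set Q) (x y : Q) : subloop S ->
  lcoset (i x) (lcoset x S `&` lcoset y S)
  `<=` lcoset (i y) (lcoset x S `&` lcoset y S).
Proof.
move=> [S1 [SM [SL _]]] _ [_ [[s Ss <-] [t St eq_yt_xs]] <-].
rewrite mulKl; exists (y * s); last by rewrite mulKl.
split; last by exists s.
exists (i x * (y * s)); last by rewrite mulKVl.
rewrite (linv_mul_coset (esym eq_yt_xs)).
exact: SM _ _ (SM _ _ Ss (SL _ _ St S1)) Ss.
Qed.

End MoufangLoop.

Theorem lemma6p7 (Q : loop) (HQ : moufang Q) (S : set Q) (HS : subloop S)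
  (x y : Q) :
  lcoset (linv x) (lcoset x S `&` lcoset y S)
  = lcoset (linv y) (lcoset x S `&` lcoset y S).
Proof.
apply/seteqP; split; first exact: linv_meet_lcoset_sub.
by rewrite setIC; apply: linv_meet_lcoset_sub.
Qed.
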